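(* Let $G\sim G(n,m)$ and fix $\delta\in(0,1)$; assume $1\le m\le(1-\delta)N$. Let $\mu=2m/n$ and let $\lambda=\lambda_n$ be real with $\lambda_n\to0$. Then, as $n\to\infty$, $$\sup_{k}\left|\frac{\mathbb E[e^{\lambda(d_1-\mu)}\mid d_2=k]}{\mathbb E[e^{\lambda(d_1-\mu)}]}-1\right|\to0,$$ where the supremum is over all $k\in\{0,1,\dots,n-1\}$ with $\mathbb P(d_2=k)>0$.
   Context: $N=\binom n2$; $G(n,m)$ is the uniform distribution over graphs on $[n]$ with exactly $m$ edges, $m=m(n)$. $d_i$ denotes the degree of vertex $i$. *)

From HB Require Import structures.
From mathcomp Require Import all_boot all_order all_algebra.
From mathcomp Require Import all_classical all_reals all_analysis.
Set Implicit Arguments. Unset Strict Implicit. Unset Printing Implicit Defensive.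
Import Order.TTheory GRing.Theory Num.Theory.
Local Open Scope ring_scope.

(* A simple graph on vertex set [n] = 'I_n is a set of 2-element subsets. *)
Definition pot_edges (n : nat) : {set {set 'I_n}} := [set e : {set 'I_n} | #|e| == 2%N].

Definition NN (n : nat) : nat := 'C(n, 2).

(* Support of G(n,m): all graphs on [n] with exactly m edges (uniform). *)
Definition Gnm (n m : nat) : {set {set {set 'I_n}}} :=
  [set G : {set {set 'I_n}} | (G \subset pot_edges n) && (#|G| == m)].

(* degree of the vertex with (0-based) label i; vertex "1" of the paper is
   label 0, vertex "2" is label 1. *)
Definition deg (n : nat) (G : {set {set 'I_n}}) (i : nat) : nat :=
  #|[set e in G | [exists x in e, nat_of_ord x == i]]|.

Section Exps.
Variable R : realType.

Definition mu (n m : nat) : R := (2 * m)%:R / n%:R.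

Definition Eexp (n m : nat) (lam : R) : R :=
  (\sum_(G in Gnm n m) expR (lam * ((deg G 0)%:R - mu n m))) / (#|Gnm n m|)%:R.

(* number of graphs in G(n,m) with d_2 = k;  P(d_2 = k) > 0 iff this is > 0 *)
Definition cnt2 (n m k : nat) : nat := #|[set G in Gnm n m | deg G 1 == k]|.

Definition Econd (n m : nat) (lam : R) (k : nat) : R :=
  (\sum_(G in Gnm n m | deg G 1 == k) expR (lam * ((deg G 0)%:R - mu n m)))
    / (cnt2 n m k)%:R.

(* sup over k in {0,...,n-1} with P(d_2 = k) > 0 (a finite max; values >= 0) *)
Definition supdev (n m : nat) (lam : R) : R :=
  \big[Num.max/0]_(k < n | (0 < cnt2 n m k)%N) `| Econd n m lam k / Eexp n m lam - 1 |.
End Exps.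

(* Conditioning on [d_2 = k] splits a graph of G(n,m) into a uniform k-subset A of the edges
   at vertex 2 and an independent uniform (m-k)-subset B of the other edges.  Only the edge
   {1,2} of A can meet vertex 1, so A changes e^{λ d_1} by a factor e^{±|λ|}.  For B, let
   Φ(j) be the mean of e^{λ #(edges at vertex 1)} over j-subsets: adding a uniformly random
   edge to a j-subset changes the weight by a factor 1 + O(|e^λ - 1| n / (N - n - m)), so
   Φ(m - k) = Φ(m) e^{±O(|λ|/δ)} for every k ≤ n.  Hence the conditional and the
   unconditional expectations both lie within a factor e^{±O(|λ|/δ)} of the same quantity,
   and their ratio tends to 1. *)

From HB Require Import structures.
From mathcomp Require Import all_boot all_order all_algebra.
From mathcomp Require Import all_classical all_reals all_analysis.
From mathcomp Require Import ring lra.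
Import Order.TTheory GRing.Theory Num.Theory.
Import numFieldNormedType.Exports.

Set Implicit Arguments. Unset Strict Implicit. Unset Printing Implicit Defensive.
Local Open Scope ring_scope.

Section KSubsets.
Variable T : finType.
Implicit Types (U A B : {set T}) (p : pred T).

Definition ksubsets (U : {set T}) (j : nat) : {set {set T}} :=
  [set B : {set T} | (B \subset U) && (#|B| == j)].

(* Double counting: each (j+1)-subset of [U] is [f |: B] for exactly j+1 pairs (B, f). *)
Lemma sum_ksubsets_extend (R : nmodType) (U : {set T}) (F : {set T} -> R) j :
  \sum_(B in ksubsets U j) \sum_(f in U :\: B) F (f |: B)
  = \sum_(B in ksubsets U j.+1) F B *+ j.+1.
Proof.
have inD (B : {set T}) : \sum_(f in U :\: B) F (f |: B) = \sum_(f in U | f \notin B) F (f |: B).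
  by apply: eq_bigl => f; rewrite !inE andbC.
under eq_bigr do rewrite inD.
rewrite (exchange_big_dep (mem U)) /=; last by move=> ? ? ? /andP[].
have mulnE (B : {set T}) : B \in ksubsets U j.+1 -> F B *+ j.+1 = \sum_(f in U | f \in B) F B.
  rewrite inE => /andP[sBU /eqP cB].
  rewrite sumr_const -cB; congr (_ *+ _); apply: eq_card => x.
  rewrite [in RHS]unfold_in /=; apply/idP/idP => [xB|/andP[]//].
  by rewrite (fintype.subsetP sBU).
rewrite (eq_bigr _ mulnE) (exchange_big_dep (mem U)) /=; last by move=> ? ? ? /andP[].
apply: eq_bigr => f fU.
rewrite [RHS](reindex_onto (fun B => f |: B) (fun B => B :\ f)) /=; last first.
  by move=> B /and3P[_ _ fB]; rewrite finset.setD1K.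
apply: eq_bigl => B; rewrite !inE fU eqxx /=.
case fB: (f \in B) => /=.
- have -> : ((f |: B) :\ f == B) = false.
    by apply/negbTE/eqP => E; move: fB; rewrite -E !inE eqxx.
  by rewrite !andbF.
- by rewrite setU1K ?fB // eqxx !andbT cardsU1 fB add1n eqSS finset.subUset finset.sub1set fU.
Qed.

Lemma card_ksubsets (U : {set T}) j : #|ksubsets U j| = 'C(#|U|, j).
Proof. exact: cards_draws. Qed.

Definition hits (p : pred T) (A : {set T}) : nat := #|[set e in A | p e]|.

Lemma hitsE p A : hits p A = (\sum_(e in A) p e)%N.
Proof.
rewrite /hits -sum1_card big_mkcond /= [RHS]big_mkcond /=.
by apply: eq_bigr => e _; rewrite !inE; case: (e \in A); case: (p e).
Qed.

Lemma hits_setU1 p f A : f \notin A -> hits p (f |: A) = (p f + hits p A)%N.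
Proof. by move=> fA; rewrite !hitsE big_setU1. Qed.

Lemma hits_setU p A B : [disjoint A & B] -> hits p (A :|: B) = (hits p A + hits p B)%N.
Proof.
by move=> dAB; rewrite !hitsE -bigU //=; apply: eq_bigl => e; rewrite !inE.
Qed.

Lemma hits_sub p A B : A \subset B -> (hits p A <= hits p B)%N.
Proof.
move=> sAB; apply: subset_leq_card; apply/fintype.subsetP => e.
by rewrite !inE => /andP[eA ->]; rewrite (fintype.subsetP sAB).
Qed.

End KSubsets.

Section DisjointSplit.
Variable T : finType.
Implicit Types X Y A B : {set T}.

Lemma setIUl_disjoint X Y A B : [disjoint X & Y] ->
  A \subset X -> B \subset Y -> (A :|: B) :&: X = A.
Proof.
move=> dXY sAX sBY; apply/setP => x; rewrite !inE.
case xA: (x \in A) => /=; first by rewrite (fintype.subsetP sAX).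
case xB: (x \in B) => //=; apply/negP => xX.
have xY := fintype.subsetP sBY _ xB.
by move: dXY; rewrite -setI_eq0 => /eqP/setP/(_ x); rewrite !inE xX xY.
Qed.

Lemma setIUr_disjoint X Y A B : [disjoint X & Y] ->
  A \subset X -> B \subset Y -> (A :|: B) :&: Y = B.
Proof. by rewrite disjoint_sym finset.setUC => dYX sAX sBY; apply: setIUl_disjoint dYX sBY sAX. Qed.

Lemma sum_disjoint_split (R : nmodType) X Y (F : {set T} -> R) k j :
  [disjoint X & Y] ->
  \sum_(G : {set T} | (G \subset X :|: Y) && (#|G :&: X| == k) && (#|G :&: Y| == j)) F G
  = \sum_(A in ksubsets X k) \sum_(B in ksubsets Y j) F (A :|: B).
Proof.
move=> dXY; rewrite pair_big /=.
set P := [pred p : {set T} * {set T} | (p.1 \in ksubsets X k) && (p.2 \in ksubsets Y j)].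
have inj : {in P &, injective (fun p : {set T} * {set T} => p.1 :|: p.2)}.
  move=> [A B] [A' B']; rewrite !inE /= => /andP[/andP[sA _] /andP[sB _]].
  move=> /andP[/andP[sA' _] /andP[sB' _]] E; congr pair.
    by rewrite -(setIUl_disjoint dXY sA sB) E (setIUl_disjoint dXY sA' sB').
  by rewrite -(setIUr_disjoint dXY sA sB) E (setIUr_disjoint dXY sA' sB').
rewrite (eq_bigl (fun p => p \in P)) // -(big_imset _ inj) /=.
apply: eq_bigl => G; apply/idP/imsetP.
  move=> /andP[/andP[sG /eqP cX] /eqP cY].
  exists (G :&: X, G :&: Y); first by rewrite !inE !finset.subsetIr cX cY !eqxx.
  by rewrite /= -finset.setIUr; apply/esym/finset.setIidPl.
move=> [[A B]]; rewrite !inE /= => /andP[/andP[sA /eqP cA] /andP[sB /eqP cB]] ->.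
by rewrite (setIUl_disjoint dXY sA sB) (setIUr_disjoint dXY sA sB) cA cB !eqxx finset.setUSS.
Qed.

End DisjointSplit.

Lemma dev_le_expR (R : realType) (y a b : R) : 0 <= y <= 1/2 -> 0 <= b ->
  `|a - b| <= y * b -> a <= expR (2 * y) * b /\ b <= expR (2 * y) * a.
Proof.
move=> /andP[y0 y1] b0; rewrite ler_norml => /andP[lo hi].
have e1 := expR_ge1Dx (2 * y).
have e0 : 0 <= expR (2 * y) := expR_ge0 _.
split.
  have : (1 + y) * b <= expR (2 * y) * b by rewrite ler_wpM2r //; lra.
  lra.
have h1 : expR (2 * y) * ((1 - y) * b) <= expR (2 * y) * a by rewrite ler_wpM2l //; lra.
have h2 : (1 + 2 * y) * (1 - y) * b <= expR (2 * y) * (1 - y) * b.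
  by rewrite ler_wpM2r // ler_wpM2r //; lra.
have h3 : 0 <= y * (1 - 2 * y) * b by rewrite !mulr_ge0 //; lra.
lra.
Qed.

Section Weights.
Variables (R : realType) (T : finType) (U : {set T}) (p : pred T) (r : R).
Hypothesis r_gt0 : 0 < r.

Definition weight (A : {set T}) : R := r ^+ hits p A.
Definition wsum (j : nat) : R := \sum_(B in ksubsets U j) weight B.
Definition wavg (j : nat) : R := wsum j / ('C(#|U|, j))%:R.

Lemma weight_ge0 A : 0 <= weight A. Proof. by rewrite exprn_ge0 // ltW. Qed.

Lemma wsum_ge0 j : 0 <= wsum j. Proof. by apply: sumr_ge0 => B _; apply: weight_ge0. Qed.

Lemma wavg_ge0 j : 0 <= wavg j. Proof. by rewrite divr_ge0 ?wsum_ge0. Qed.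

Lemma wsum_gt0 j : (j <= #|U|)%N -> 0 < wsum j.
Proof.
rewrite -bin_gt0 -card_ksubsets => /card_gt0P[B0 B0in].
rewrite /wsum (bigD1 B0) //= ltr_wpDr ?exprn_gt0 //.
by apply: sumr_ge0 => B _; apply: weight_ge0.
Qed.

Lemma wavg_gt0 j : (j <= #|U|)%N -> 0 < wavg j.
Proof. by move=> jU; rewrite divr_gt0 ?wsum_gt0 // ltr0n bin_gt0. Qed.

Lemma wsum_eq0 j : (#|U| < j)%N -> wsum j = 0.
Proof.
move=> /bin_small; rewrite -card_ksubsets => /card0_eq c0.
by rewrite /wsum big_pred0 // => B; rewrite c0.
Qed.

Lemma wsum_succ j : wsum j.+1 *+ j.+1 =
  \sum_(B in ksubsets U j) weight B * ((#|U| - j)%:R + (r - 1) * (hits p (U :\: B))%:R).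
Proof.
rewrite /wsum -sumrMnl -sum_ksubsets_extend; apply: eq_bigr => B.
rewrite inE => /andP[sBU /eqP cB].
transitivity (\sum_(f in U :\: B) weight B * (1 + (r - 1) * (p f : nat)%:R)).
  apply: eq_bigr => f; rewrite inE => /andP[fB _]; rewrite /weight hits_setU1 // exprD.
  by case: (p f) => /=; rewrite ?expr1 ?expr0; ring.
rewrite -mulr_sumr big_split /= sumr_const -mulr_sumr -natr_sum -hitsE.
by rewrite cardsD (finset.setIidPr sBU) cB.
Qed.

(* Adding one element to a j-subset multiplies its weight by r exactly when the element is a
   p-hit, and at most [hits p U] of the [#|U| - j] candidates are. *)
Lemma wsum_succ_dev j : `| wsum j.+1 *+ j.+1 - (#|U| - j)%:R * wsum j |
   <= `|r - 1| * (hits p U)%:R * wsum j.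
Proof.
rewrite wsum_succ /wsum mulr_sumr -sumrB mulr_sumr.
apply: (le_trans (ler_norm_sum _ _ _)); apply: ler_sum => B _.
have -> : weight B * ((#|U| - j)%:R + (r - 1) * (hits p (U :\: B))%:R)
    - (#|U| - j)%:R * weight B = (r - 1) * (hits p (U :\: B))%:R * weight B by ring.
rewrite !normrM (ger0_norm (weight_ge0 _)) normr_nat ler_wpM2r ?weight_ge0 //.
by rewrite ler_wpM2l // ler_nat hits_sub // subsetDl.
Qed.

Lemma wavg_succ (y : R) j : 0 <= y <= 1/2 -> (j < #|U|)%N ->
  `|r - 1| * (hits p U)%:R <= y * (#|U| - j)%:R ->
  wavg j.+1 <= expR (2 * y) * wavg j /\ wavg j <= expR (2 * y) * wavg j.+1.
Proof.
move=> hy jU hr.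
set K : R := (#|U| - j)%:R; set c : R := ('C(#|U|, j))%:R.
have K0 : 0 < K by rewrite ltr0n subn_gt0.
have c0 : 0 < c by rewrite ltr0n bin_gt0 ltnW.
have Kc0 : 0 < K * c by rewrite mulr_gt0.
have avg1 : wavg j.+1 = wsum j.+1 *+ j.+1 / (K * c).
  rewrite /wavg -[in RHS]mulr_natr -natrM -mul_bin_left mulnC natrM.
  by rewrite -mulf_div divff ?mulr1 // pnatr_eq0.
have avg0 : wavg j = K * wsum j / (K * c).
  by rewrite /wavg -mulf_div divff ?mul1r // gt_eqF.
have dev : `|wsum j.+1 *+ j.+1 - K * wsum j| <= y * (K * wsum j).
  apply: le_trans (wsum_succ_dev j) _.
  by rewrite mulrA ler_wpM2r ?wsum_ge0 // mulrC.
have [up lo] := dev_le_expR hy (mulr_ge0 (ltW K0) (wsum_ge0 j)) dev.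
have iKc : 0 <= (K * c)^-1 by rewrite invr_ge0 ltW.
by rewrite avg1 avg0; split; rewrite mulrA ler_wpM2r.
Qed.

Lemma wavg_chain (y : R) m j : 0 <= y <= 1/2 -> (m <= #|U|)%N -> (j <= m)%N ->
  `|r - 1| * (hits p U)%:R <= y * (#|U| - m)%:R ->
  wavg j <= expR (2 * y * (m - j)%:R) * wavg m /\
  wavg m <= expR (2 * y * (m - j)%:R) * wavg j.
Proof.
move=> hy mU jm hr; have := subnK jm; move: (m - j)%N => t.
elim: t j {jm} => [|t IH] j jt.
  by rewrite add0n in jt; rewrite jt mulr0 expR0 !mul1r.
have jm : (j < m)%N by rewrite -jt addSn ltnS leq_addl.
have hrj : `|r - 1| * (hits p U)%:R <= y * (#|U| - j)%:R.
  apply: le_trans hr _; rewrite ler_wpM2l //; first by case/andP: hy.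
  by rewrite ler_nat leq_sub2l // ltnW.
have [s1 s2] := wavg_succ hy (leq_trans jm mU) hrj.
have [i1 i2] := IH j.+1 (etrans (addnS t j) jt).
have -> : expR (2 * y * t.+1%:R) = expR (2 * y) * expR (2 * y * t%:R).
  by rewrite -expRD -addn1 natrD; congr expR; ring.
have e0 := expR_ge0 (2 * y); have et0 := expR_ge0 (2 * y * t%:R).
split.
  by apply: le_trans s2 _; rewrite -mulrA ler_wpM2l.
by apply: le_trans i2 _; rewrite [expR (2 * y) * _]mulrC -[_ * _ * wavg j]mulrA ler_wpM2l.
Qed.

End Weights.

Section Stars.
Variable n : nat.
Implicit Types (e : {set 'I_n}) (A G : {set {set 'I_n}}).

Definition incident (i : nat) e : bool := [exists x in e, nat_of_ord x == i].

Definition star (i : nat) : {set {set 'I_n}} := [set e in pot_edges n | incident i e].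
Definition costar (i : nat) : {set {set 'I_n}} := pot_edges n :\: star i.

Lemma deg_hits G i : deg G i = hits (incident i) G. Proof. by []. Qed.

Lemma star_sub i : star i \subset pot_edges n.
Proof. by apply/fintype.subsetP => e; rewrite inE => /andP[]. Qed.

Lemma disjoint_star i : [disjoint star i & costar i].
Proof.
by rewrite finset.disjoints_subset /costar finset.setDE finset.setCI finset.setCK finset.subsetUr.
Qed.

Lemma pot_edgesE i : pot_edges n = star i :|: costar i.
Proof.
by rewrite -[in LHS](finset.setID (pot_edges n) (star i)) (finset.setIidPr (star_sub i)).
Qed.

Lemma card_costar i : #|costar i| = ('C(n, 2) - #|star i|)%N.
Proof. by rewrite cardsD (finset.setIidPr (star_sub i)) /pot_edges card_draws card_ord. Qed.

Lemma card_star_le i : (#|star i| <= n)%N.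
Proof.
case: (set_0Vmem (star i)) => [->|[e0]]; first by rewrite cards0.
rewrite !inE => /andP[_ /existsP[xi /andP[_ /eqP xiv]]].
have sub : star i \subset [set [set v; xi] | v in 'I_n].
  apply/fintype.subsetP => e; rewrite !inE => /andP[/cards2P[a [b [ab ->]]]].
  move=> /existsP[z /andP[zab /eqP zv]].
  have zxi : z = xi by apply: val_inj; rewrite /= zv xiv.
  move: zab; rewrite zxi !inE => /orP[] /eqP ->; apply/imsetP.
    by exists b; rewrite // finset.setUC.
  by exists a.
by rewrite (leq_trans (subset_leq_card sub)) // (leq_trans (leq_imset_card _ _)) // card_ord.
Qed.

Lemma hits_costar_le i j : (hits (incident i) (costar j) <= n)%N.
Proof.
apply: leq_trans (card_star_le i); apply: subset_leq_card.
apply/fintype.subsetP => e; rewrite inE => /andP[/finset.setDP[eP _] ie].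
by rewrite inE eP ie.
Qed.

(* Only the edge [{i, j}] is incident to both [i] and [j]. *)
Lemma hits_star_le1 i j A : i != j -> A \subset star j -> (hits (incident i) A <= 1)%N.
Proof.
move=> ij sA; apply/card_le1_eqP => e e'; rewrite !inE => /andP[eA ie] /andP[e'A ie'].
have := fintype.subsetP sA _ eA; have := fintype.subsetP sA _ e'A.
rewrite !inE => /andP[c' je'] /andP[c je].
have vertexE (f f' : {set 'I_n}) k : incident k f -> incident k f' ->
    exists2 x, x \in f & x \in f' /\ nat_of_ord x = k.
  move=> /existsP[x /andP[xf /eqP xk]] /existsP[x' /andP[x'f' /eqP x'k]].
  by exists x => //; have -> : x = x' by apply: val_inj; rewrite /= xk x'k.
have [x xe [xe' xi]] := vertexE _ _ _ ie ie'.
have [z ze [ze' zj]] := vertexE _ _ _ je je'.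
have xz : x != z by apply: contraNneq ij => xz; rewrite -xi -zj xz.
have pairE (f : {set 'I_n}) : #|f| == 2%N -> x \in f -> z \in f -> f = [set x; z].
  move=> /eqP cf xf zf; apply/esym/eqP; rewrite eqEcard cf cards2 xz leqnn andbT.
  by rewrite finset.subUset !finset.sub1set xf zf.
by rewrite (pairE _ c xe ze) (pairE _ c' xe' ze').
Qed.

End Stars.

Section GnmSplit.
Variables n m : nat.
Implicit Types (G : {set {set 'I_n}}) (i k : nat).

Lemma deg_le_card G i : (deg G i <= #|G|)%N.
Proof. by apply: subset_leq_card; apply/fintype.subsetP => e; rewrite inE => /andP[]. Qed.

Lemma deg_star G i : G \subset pot_edges n -> deg G i = #|G :&: star n i|.
Proof.
move=> sG; apply: eq_card => e; rewrite /star !inE.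
by case eG: (e \in G) => //=; have := fintype.subsetP sG _ eG; rewrite inE => ->.
Qed.

Lemma card_split_star G i : G \subset pot_edges n ->
  #|G| = (#|G :&: star n i| + #|G :&: costar n i|)%N.
Proof.
move=> sG; rewrite -[in LHS](finset.setIidPl sG) (pot_edgesE n i) finset.setIUr cardsU.
rewrite finset.setIACA finset.setIid (disjoint_setI0 (disjoint_star n i)).
by rewrite finset.setI0 cards0 subn0.
Qed.

Lemma in_Gnm_deg G i k : (k <= m)%N ->
  (G \in Gnm n m) && (deg G i == k) =
  [&& G \subset star n i :|: costar n i, #|G :&: star n i| == k & #|G :&: costar n i| == m - k]%N.
Proof.
move=> km; rewrite inE -pot_edgesE.
case sG: (G \subset pot_edges n) => //=.
rewrite deg_star // (card_split_star i sG).
apply/idP/idP => [/andP[/eqP <- /eqP ->]|/andP[/eqP -> /eqP ->]].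
  by rewrite addKn !eqxx.
by rewrite subnKC // !eqxx.
Qed.

Lemma sum_Gnm_deg (R : nmodType) (F : {set {set 'I_n}} -> R) i k : (k <= m)%N ->
  \sum_(G in Gnm n m | deg G i == k) F G =
  \sum_(A in ksubsets (star n i) k) \sum_(B in ksubsets (costar n i) (m - k)) F (A :|: B).
Proof.
move=> km; rewrite -sum_disjoint_split ?disjoint_star //.
by apply: eq_bigl => G; rewrite in_Gnm_deg // andbA.
Qed.

Lemma sum_Gnm_by_deg (R : nmodType) (F : {set {set 'I_n}} -> R) i :
  \sum_(G in Gnm n m) F G = \sum_(k < m.+1) \sum_(G in Gnm n m | deg G i == k) F G.
Proof.
rewrite (partition_big (fun G => (inord (deg G i) : 'I_m.+1)) predT) //=.
apply: eq_bigr => k _; apply: eq_bigl => G.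
case GG: (G \in Gnm n m) => //=.
have dm : (deg G i < m.+1)%N.
  by move: GG; rewrite inE => /andP[_ /eqP <-]; rewrite ltnS deg_le_card.
by rewrite -(inj_eq val_inj) /= inordK.
Qed.

Lemma card_Gnm_by_deg : #|Gnm n m| = (\sum_(k < m.+1) cnt2 n m k)%N.
Proof.
rewrite -sum1_card (sum_Gnm_by_deg (fun _ => 1%N : nat) 1); apply: eq_bigr => k _.
by rewrite /cnt2 -sum1_card; apply: eq_bigl => G; rewrite inE.
Qed.

Lemma cnt2_gt0_le k : (0 < cnt2 n m k)%N -> (k <= m)%N.
Proof.
move=> /card_gt0P[G]; rewrite !inE => /andP[/andP[_ /eqP <-] /eqP <-].
exact: deg_le_card.
Qed.

Lemma cnt2E k : (k <= m)%N ->
  cnt2 n m k = ('C(#|star n 1|, k) * 'C(#|costar n 1|, m - k))%N.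
Proof.
move=> km; rewrite /cnt2 -sum1_card.
rewrite (eq_bigl (fun G => (G \in Gnm n m) && (deg G 1 == k))); last by move=> G; rewrite inE.
rewrite (sum_Gnm_deg (fun _ => 1%N : nat) 1 km).
rewrite -!card_ksubsets -[X in (X * _)%N]sum1_card big_distrl /=; apply: eq_bigr => A _.
by rewrite mul1n sum1_card.
Qed.

End GnmSplit.

Section Tilt.
Variables (R : realType) (n m : nat) (lam : R).

Definition tilt (G : {set {set 'I_n}}) : R := expR (lam * ((deg G 0)%:R - mu R n m)).

Notation wsum0 U := (wsum U (incident 0) (expR lam)).

Lemma sum_tilt_deg k : (k <= m)%N ->
  \sum_(G in Gnm n m | deg G 1 == k) tilt G =
  expR (- (lam * mu R n m)) * wsum0 (star n 1) k * wsum0 (costar n 1) (m - k).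
Proof.
move=> km; rewrite sum_Gnm_deg // -mulrA mulr_suml mulr_sumr; apply: eq_bigr => A.
rewrite inE => /andP[sA _]; rewrite mulrA mulr_sumr; apply: eq_bigr => B.
rewrite inE => /andP[sB _].
have dAB : [disjoint A & B].
  by apply: disjointWl sA _; apply: disjointWr sB _; apply: disjoint_star.
rewrite /tilt deg_hits hits_setU // natrD /weight -!expRM_natr -!expRD.
by congr expR; ring.
Qed.

Lemma wsum_star_bounds k :
  expR (- `|lam|) * ('C(#|star n 1|, k))%:R <= wsum0 (star n 1) k
  <= expR `|lam| * ('C(#|star n 1|, k))%:R.
Proof.
rewrite -card_ksubsets -sum1_card natr_sum !mulr_sumr.
apply/andP; split; apply: ler_sum => A; rewrite inE => /andP[sA _]; rewrite mulr1 /weight;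
  have := hits_star_le1 (isT : (0 != 1)%N) sA; case: hits => [|[|//]] _; rewrite ?expr0 ?expr1.
- by rewrite expR_le1 oppr_le0.
- by rewrite ler_expR lerNl -normrN ler_norm.
- by rewrite -expR0 ler_expR normr_ge0.
- by rewrite ler_expR ler_norm.
Qed.

End Tilt.

Lemma ratio_dev_le (R : realFieldType) (L U x z : R) : 0 < L -> L <= x <= U -> L <= z <= U ->
  `|x / z - 1| <= U / L - 1.
Proof.
move=> L0 /andP[Lx xU] /andP[Lz zU].
have z0 : 0 < z by apply: lt_le_trans Lz.
have U0 : 0 < U by apply: lt_le_trans zU.
have up : x / z <= U / L.
  rewrite ler_pdivrMr // mulrAC ler_pdivlMr //.
  by apply: le_trans (ler_wpM2r (ltW L0) xU) _; rewrite ler_wpM2l // ltW.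
have lo : L / U <= x / z.
  rewrite ler_pdivrMr // mulrAC ler_pdivlMr //.
  by apply: le_trans (ler_wpM2l (ltW L0) zU) _; rewrite ler_wpM2r // ltW.
have s1 : 1 <= U / L by rewrite ler_pdivlMr // mul1r; apply: le_trans Lz zU.
have sym : 1 - L / U <= U / L - 1.
  rewrite -invf_div -subr_ge0; set s := U / L in s1 *.
  have -> : s - 1 - (1 - s^-1) = (s - 1) ^+ 2 / s by field; rewrite gt_eqF //; lra.
  by rewrite divr_ge0 ?sqr_ge0 //; lra.
by rewrite ler_norml; apply/andP; split; lra.
Qed.

Section TiltBounds.
Variables (R : realType) (n m : nat) (lam y : R).
Hypotheses (m_le : (m <= #|costar n 1|)%N) (hy : 0 <= y <= 1/2)
  (hdev : `|expR lam - 1| * n%:R <= y * (#|costar n 1| - m)%:R).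

Let avg := wavg (costar n 1) (incident 0) (expR lam).
Let a : R := `|lam| + 2 * y * n%:R.
Let base : R := expR (- (lam * mu R n m)) * avg m.

Lemma wavg_costar_gt0 : 0 < avg m.
Proof. exact: (wavg_gt0 (incident 0) (expR_gt0 lam) m_le). Qed.

Lemma wavg_costar_near k : (k <= m)%N -> (k <= n)%N ->
  avg (m - k) <= expR (2 * y * n%:R) * avg m /\ avg m <= expR (2 * y * n%:R) * avg (m - k).
Proof.
move=> km kn.
have hr : `|expR lam - 1| * (hits (incident 0) (costar n 1))%:R
    <= y * (#|costar n 1| - m)%:R.
  apply: le_trans hdev; rewrite ler_wpM2l // ler_nat; exact: hits_costar_le.
have [c1 c2] := wavg_chain (expR_gt0 lam) hy m_le (leq_subr k m) hr.
have ek : expR (2 * y * (m - (m - k))%:R) <= expR (2 * y * n%:R).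
  by rewrite subKn // ler_expR ler_wpM2l ?ler_nat // mulr_ge0 //; case/andP: hy.
have a0 := wavg_ge0 (costar n 1) (incident 0) (expR_gt0 lam) (m - k).
have am0 := ltW wavg_costar_gt0.
by split; [apply: le_trans c1 _ | apply: le_trans c2 _]; rewrite ler_wpM2r.
Qed.

Lemma sum_tilt_deg_bounds k : (k <= m)%N ->
  base * expR (- a) * (cnt2 n m k)%:R <= \sum_(G in Gnm n m | deg G 1 == k) tilt m lam G
  <= base * expR a * (cnt2 n m k)%:R.
Proof.
move=> km; rewrite sum_tilt_deg // cnt2E // natrM.
have [kS|Sk] := leqP k #|star n 1|; last by rewrite wsum_eq0 // bin_small // !(mulr0, mul0r) lexx.
have kn := leq_trans kS (card_star_le n 1).
have [up_avg lo_avg'] := wavg_costar_near km kn.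
have lo_avg : expR (- (2 * y * n%:R)) * avg m <= avg (m - k).
  by rewrite -(ler_pM2l (expR_gt0 (2 * y * n%:R))) mulrA -expRD subrr expR0 mul1r.
have /andP[lo_S hi_S] := wsum_star_bounds n lam k.
set cS : R := ('C(#|star n 1|, k))%:R; set cC : R := ('C(#|costar n 1|, m - k))%:R.
have wC : wsum (costar n 1) (incident 0) (expR lam) (m - k) = avg (m - k) * cC.
  by rewrite /avg /wavg divfK // pnatr_eq0 -lt0n bin_gt0 (leq_trans (leq_subr k m) m_le).
set E0 := expR (- (lam * mu R n m)); set wS := wsum _ _ _ k.
have E0cC : 0 <= E0 * cC by rewrite mulr_ge0 ?expR_ge0.
have := wavg_ge0 (costar n 1) (incident 0) (expR_gt0 lam) (m - k).
have am0 := ltW wavg_costar_gt0.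
rewrite wC /base /a => a0; apply/andP; split.
  have -> : E0 * avg m * expR (- (`|lam| + 2 * y * n%:R)) * (cS * cC)
      = E0 * cC * ((expR (- `|lam|) * cS) * (expR (- (2 * y * n%:R)) * avg m)).
    by rewrite opprD expRD; ring.
  have -> : E0 * wS * (avg (m - k) * cC) = E0 * cC * (wS * avg (m - k)) by ring.
  by rewrite ler_wpM2l // ler_pM // mulr_ge0 ?expR_ge0.
have -> : E0 * avg m * expR (`|lam| + 2 * y * n%:R) * (cS * cC)
    = E0 * cC * ((expR `|lam| * cS) * (expR (2 * y * n%:R) * avg m)) by rewrite expRD; ring.
have -> : E0 * wS * (avg (m - k) * cC) = E0 * cC * (wS * avg (m - k)) by ring.
by rewrite ler_wpM2l // ler_pM // wsum_ge0 ?expR_gt0.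
Qed.

Lemma Econd_bounds k : (0 < cnt2 n m k)%N ->
  base * expR (- a) <= Econd n m lam k <= base * expR a.
Proof.
move=> ck; have /andP[lo hi] := sum_tilt_deg_bounds (cnt2_gt0_le ck).
by rewrite /Econd ler_pdivlMr ?ler_pdivrMr ?ltr0n // lo.
Qed.

Lemma Eexp_bounds : (0 < #|Gnm n m|)%N -> base * expR (- a) <= Eexp n m lam <= base * expR a.
Proof.
rewrite -(ltr0n R) => G0.
rewrite /Eexp ler_pdivlMr ?ler_pdivrMr // (sum_Gnm_by_deg m _ 1) card_Gnm_by_deg natr_sum.
rewrite !mulr_sumr; apply/andP; split; apply: ler_sum => k _.
  by have /andP[] := sum_tilt_deg_bounds (ltn_ord k).
by have /andP[] := sum_tilt_deg_bounds (ltn_ord k).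
Qed.

Lemma supdev_le_expR : supdev n m lam <= expR (2 * a) - 1.
Proof.
have a0 : 0 <= a by rewrite addr_ge0 // !mulr_ge0 //; case/andP: hy.
have B0 : 0 <= expR (2 * a) - 1 by rewrite subr_ge0 -expR0 ler_expR mulr_ge0.
apply: (big_ind (fun v => v <= expR (2 * a) - 1)) => // [x z hx hz|k ck].
  by rewrite ge_max hx hz.
have b0 : 0 < base := mulr_gt0 (expR_gt0 _) wavg_costar_gt0.
have L0 : 0 < base * expR (- a) := mulr_gt0 b0 (expR_gt0 _).
have G0 : (0 < #|Gnm n m|)%N.
  apply: leq_trans ck (subset_leq_card _).
  by apply/fintype.subsetP => G; rewrite inE => /andP[].
apply: le_trans (ratio_dev_le L0 (Econd_bounds ck) (Eexp_bounds G0)) _.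
rewrite -mulf_div divff ?gt_eqF // mul1r expRN invrK -expRD.
by rewrite (_ : a + a = 2 * a) //; ring.
Qed.

End TiltBounds.

Lemma abs_expR_sub1_le (R : realType) (x : R) : `|x| <= 1/2 -> `|expR x - 1| <= 2 * `|x|.
Proof.
move=> hx; have e1 := expR_ge1Dx x; have ex := expR_gt0 x.
have [x0|x0] := lerP 0 x; last first.
  rewrite ltr0_norm // in hx *; rewrite ler0_norm; first by lra.
  by rewrite subr_le0 -expR0 ler_expR ltW.
rewrite !ger0_norm ?subr_ge0 // in hx *; last by lra.
have h2 : (1 - x) * expR x <= 1.
  by rewrite -[leRHS]expR0 -(addNr x) expRD ler_wpM2r ?expR_ge0 // expR_ge1Dx.
have h3 : 0 <= x * (expR x - 1) by apply: mulr_ge0; lra.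
nra.
Qed.

Lemma card_costar_gap (R : realFieldType) (d : R) n m : 0 < d -> (2 <= n)%N ->
  8 <= d * n%:R -> m%:R <= (1 - d) * (NN n)%:R ->
  (m <= #|costar n 1|)%N /\ d * (n%:R * n%:R) / 8 <= (#|costar n 1| - m)%:R.
Proof.
move=> d0 n2 h8 hm; set C : R := (NN n)%:R in hm.
have nR : 2 <= n%:R :> R by rewrite (ler_nat R 2).
have hC : 2 * C = n%:R * (n%:R - 1).
  have E : (n * n.-1 = 2 * 'C(n, 2))%N by rewrite -(mul_bin_diag n 1) bin1.
  by rewrite /C /NN -natrM -E natrM -subn1 natrB // ltnW.
have hE : C - n%:R <= (#|costar n 1|)%:R.
  have sP := subset_leq_card (star_sub n 1).
  rewrite /pot_edges card_draws card_ord in sP.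
  rewrite card_costar natrB //.
  by rewrite lerD2l lerN2 ler_nat card_star_le.
have hC4 : n%:R * n%:R / 4 <= C.
  have : n%:R * 2 <= n%:R * n%:R :> R by rewrite ler_wpM2l //; lra.
  lra.
have hD : d * (n%:R * n%:R) / 8 <= (#|costar n 1|)%:R - m%:R.
  have a1 : d * (n%:R * n%:R / 4) <= d * C by rewrite ler_wpM2l //; lra.
  have a2 : n%:R * 8 <= n%:R * (d * n%:R) by rewrite ler_wpM2l //; lra.
  lra.
have mE : (m <= #|costar n 1|)%N.
  rewrite -(ler_nat R); have : 0 <= d * (n%:R * n%:R) / 8 by rewrite !mulr_ge0 //; lra.
  lra.
by split; rewrite // natrB.
Qed.

Lemma supdev_ge0 (R : realType) n m (lam : R) : 0 <= supdev n m lam.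
Proof. by apply: (big_ind (fun v => 0 <= v)) => // x z hx _; rewrite le_max hx. Qed.

Lemma supdev_le_lam (R : realType) (d : R) n m (lam : R) : 0 < d -> (2 <= n)%N ->
  8 <= d * n%:R -> m%:R <= (1 - d) * (NN n)%:R -> `|lam| * (4 * (1 + 32 / d)) <= 1 ->
  supdev n m lam <= 4 * (1 + 32 / d) * `|lam|.
Proof.
move=> d0 n2 h8 hm hl.
have [mE gap] := card_costar_gap d0 n2 h8 hm.
set c := 1 + 32 / d in hl *; set l := `|lam| in hl *.
have l0 : 0 <= l := normr_ge0 lam.
have n0 : n%:R != 0 :> R by rewrite pnatr_eq0 -lt0n (leq_trans _ n2).
have dn0 : 0 < d * n%:R by lra.
have ld0 : 0 <= l / d by rewrite divr_ge0 // ltW.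
have hl' : 4 * l + 128 * (l / d) <= 1 by move: hl; rewrite /c; congr (_ <= _); ring.
have ld : 128 * l <= d.
  have : 128 * (l / d) <= 1 by lra.
  by rewrite mulrA ler_pdivrMr // mul1r.
(* The smallest [y] for which [gap] yields the hypothesis of [supdev_le_expR]. *)
set y := 16 * l / (d * n%:R).
have yE : y * (d * n%:R) = 16 * l by rewrite /y divfK // gt_eqF.
have y0 : 0 <= y by rewrite /y divr_ge0 ?(ltW dn0) // mulr_ge0.
have hy : 0 <= y <= 1/2.
  have : d * 2 <= d * n%:R by rewrite ler_wpM2l ?(ltW d0) // (ler_nat R 2).
  rewrite y0 /=; nra.
have hdev : `|expR lam - 1| * n%:R <= y * (#|costar n 1| - m)%:R.
  have e1 : `|expR lam - 1| <= 2 * l by apply: abs_expR_sub1_le; rewrite -/l; lra.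
  apply: le_trans (ler_wpM2r (ler0n _ _) e1) _.
  apply: le_trans (ler_wpM2l y0 gap).
  by rewrite /y le_eqVlt; apply/orP; left; apply/eqP; field; rewrite n0 gt_eqF.
have aE : `|lam| + 2 * y * n%:R = c * l by rewrite /y /c /l; field; rewrite n0 gt_eqF.
apply: le_trans (supdev_le_expR mE hy hdev) _; rewrite aE.
have cl0 : 0 <= 2 * (c * l) by rewrite !mulr_ge0 // /c addr_ge0 // divr_ge0 // ltW.
have hx : `|2 * (c * l)| <= 1/2 by rewrite ger0_norm //; lra.
have := le_trans (ler_norm _) (abs_expR_sub1_le hx); rewrite ger0_norm // => h; lra.
Qed.

Local Open Scope classical_set_scope.
Local Open Scope ring_scope.

Theorem mainTheorem16 (R : realType) (delta : R) (m : nat -> nat) (lam : nat -> R) :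
  0 < delta < 1 ->
  (\forall n \near \oo, (1 <= m n)%N /\ (m n)%:R <= (1 - delta) * (NN n)%:R) ->
  lam @ \oo --> 0 ->
  (fun n => supdev n (m n) (lam n)) @ \oo --> 0.
Proof.
move=> /andP[d0 _] hm /cvgr0Pnorm_le hlam; apply/cvgr0Pnorm_le => e e0.
set C := 4 * (1 + 32 / delta).
have C0 : 0 < C by rewrite /C mulr_gt0 // addr_gt0 // divr_gt0.
have eps0 : 0 < Num.min 1 e / C by rewrite divr_gt0 // lt_min ltr01 e0.
have hl := hlam _ eps0.
near=> n.
have [_ hmn] : (1 <= m n)%N /\ (m n)%:R <= (1 - delta) * (NN n)%:R by near: n.
have hln : `|lam n| <= Num.min 1 e / C by near: n.
have h8 : 8 / delta <= n%:R by near: n; exact: nbhs_infty_ger.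
have n2 : (2 <= n)%N by near: n; exact: nbhs_infty_ge.
move: hln; rewrite ler_pdivlMr // le_min => /andP[hl1 hle].
have h8' : 8 <= delta * n%:R by rewrite mulrC -ler_pdivrMr.
rewrite ger0_norm ?supdev_ge0 //.
by apply: le_trans (supdev_le_lam d0 n2 h8' hmn hl1) _; rewrite -/C mulrC.
Unshelve. all: by end_near.
Qed.
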